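(* Let $n>3$. There exist functions $\rho,p:[0,\infty[\to]0,\infty[$ with the following properties. 1. Both $\rho$ and $p$ are $C^\infty$ functions of $r^2$. 2. $\rho'(r)<0$ for $r>0$, and $\rho''(0)<0$. 3. $\rho(r)=r^{-2n/(n-1)}$ for $r>1$. 4. With $m(r)=4\pi\int_0^r s^2\rho(s)\,ds$, one has $p(r)=\int_r^\infty s^{-2}m(s)\rho(s)\,ds$. In particular $p'(r)=-\rho(r)m(r)/r^2$, i.e. $(\rho,p)$ is a static spherically symmetric solution of the Euler–Poisson system. 5. There is a smooth function $F$ on $]0,\rho(0)[$ with $F'>0$ and $p(r)=F(\rho(r))$ for all $r>0$. 6. For $0<\rho<\rho(1)$, $$F(\rho)=\frac{4\pi(n-1)^2}{2(n+1)(n-3)}\,\rho^{(n+1)/n},$$ i.e. the equation of state is polytropic of index $n$ at low densities. Moreover, $m(r)=4\pi\frac{n-1}{n-3}r^{(n-3)/(n-1)}$ for $r>1$. Hence this steady state has unbounded support ($\rho>0$ everywhere) and infinite total mass. *)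

From Stdlib Require Import Reals.
From Coquelicot Require Import Coquelicot.
Open Scope R_scope.

Definition smooth (f : R -> R) : Prop :=
  forall (k : nat) (x : R), ex_derive_n f k x.

Definition smooth_on_open (f : R -> R) (a b : R) : Prop :=
  forall (k : nat) (x : R), a < x < b -> ex_derive_n f k x.

Definition mass (rho : R -> R) (r : R) : R :=
  4 * PI * RInt (fun s => s ^ 2 * rho s) 0 r.

(* The density is [rho r = G (r^2)] for a smooth, positive, strictly decreasing profile [G] equal
   to [t^(-beta)], [beta = n/(n-1)], for [t >= 1]. Below [t = 1], [G] is a smoothed power of a ramp
   plus a bump supported in [t < 1], built from the flat function [exp (-1/x)]; the bump weight is
   tuned so that [m(1) = 4 pi (n-1)/(n-3)], which makes [m(r) = 4 pi (n-1)/(n-3) r^((n-3)/(n-1))]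
   exactly for [r >= 1]. Writing [m(r) = r^3 mu(r^2)] with [mu(t) = 4 pi \int_0^1 v^2 G(t v^2) dv]
   shows that [m / r^3] is smooth in [r^2]; the pressure [p(r) = P(r^2)] with [P' = - G mu / 2]
   is then smooth in [r^2] and, with [P(1)] the polytropic constant, equals [P(1) t^(1-2 beta)] for
   [t >= 1], so it decays at infinity and is the tail integral. As [G] is strictly decreasing,
   [F = P o G^-1] is a smooth equation of state with [F' = P' / G' > 0]; below density [G 1 = 1]
   both [G] and [P] are pure powers, which gives the polytrope. *)

From Stdlib Require Import Reals Lra Lia ClassicalEpsilon Ranalysis5 Factorial.
From Coquelicot Require Import Coquelicot.
Open Scope R_scope.

Ltac rsimpl := unfold scal, plus, mult, opp, minus, zero, one; simpl; unfold mult; simpl.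

Lemma is_derive_eq (f : R -> R) (x l l' : R) : is_derive f x l -> l = l' -> is_derive f x l'.
Proof. now intros H <-. Qed.

(** * Functions of class C^k on an open set *)

Fixpoint Ck (U : R -> Prop) (k : nat) (f : R -> R) : Prop :=
  match k with
  | O => True
  | S k => (forall x, U x -> ex_derive f x) /\ Ck U k (Derive f)
  end.

Lemma Ck_pred U k f : Ck U (S k) f -> Ck U k f.
Proof. revert f; induction k as [|k IH]; intros f [Hd Hf]; split; auto. Qed.

Lemma Ck_le U k j f : (j <= k)%nat -> Ck U k f -> Ck U j f.
Proof. intros Hjk; induction Hjk as [|k _ IH]; auto using Ck_pred. Qed.

Lemma Ck_subset U V k f : (forall x, V x -> U x) -> Ck U k f -> Ck V k f.
Proof.
  intros HVU; revert f; induction k as [|k IH]; intros f; simpl; auto.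
  intros [Hd Hf]; split; auto.
Qed.

Lemma Ck_continuous U k f x : Ck U (S k) f -> U x -> continuous f x.
Proof. intros [Hd _] Hx. now apply (ex_derive_continuous f), Hd. Qed.

Lemma ex_derive_n_Ck U k f x : Ck U (S k) f -> U x -> ex_derive (Derive_n f k) x.
Proof.
  revert f; induction k as [|k IH]; intros f [Hd Hf] Hx; [now apply Hd|].
  apply (ex_derive_ext (Derive_n (Derive f) k)); [|now apply IH].
  intros t. rewrite (Derive_n_comp f k 1). now replace (k + 1)%nat with (S k) by lia.
Qed.

Lemma smooth_Ck f : (forall k, Ck (fun _ => True) k f) -> smooth f.
Proof. intros H [|k] x; [exact I|]. now apply (ex_derive_n_Ck (fun _ => True)). Qed.

Lemma smooth_on_open_Ck f a b :
  (forall k, Ck (fun x => a < x < b) k f) -> smooth_on_open f a b.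
Proof. intros H [|k] x Hx; [exact I|]. now apply (ex_derive_n_Ck (fun x => a < x < b)). Qed.

Section CkOpen.

Variable U : R -> Prop.
Hypothesis HU : open U.

Lemma Ck_ext k f g : (forall x, U x -> f x = g x) -> Ck U k f -> Ck U k g.
Proof.
  revert f g; induction k as [|k IH]; intros f g Hfg; simpl; auto.
  assert (Hloc : forall x, U x -> locally x (fun y => f y = g y)).
  { intros x Hx. eapply filter_imp; [|exact (HU x Hx)]. exact Hfg. }
  intros [Hd Hf]; split.
  - intros x Hx. apply (ex_derive_ext_loc f); auto.
  - apply (IH (Derive f)); auto. intros x Hx. now apply Derive_ext_loc, Hloc.
Qed.

Lemma Ck_S_is_derive k f f' :
  (forall x, U x -> is_derive f x (f' x)) -> Ck U k f' -> Ck U (S k) f.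
Proof.
  intros Hd Hf'; split.
  - intros x Hx. eexists; now apply Hd.
  - apply (Ck_ext k f'); auto. intros x Hx. symmetry. now apply is_derive_unique, Hd.
Qed.

Lemma Ck_const k c : Ck U k (fun _ => c).
Proof.
  revert c; induction k as [|k IH]; intros c; simpl; auto.
  apply Ck_S_is_derive with (fun _ => 0); auto.
  intros x _; eapply is_derive_eq; [apply is_derive_const|reflexivity].
Qed.

Lemma Ck_id k : Ck U k (fun x => x).
Proof.
  destruct k as [|k]; simpl; auto.
  apply Ck_S_is_derive with (fun _ => 1); [|apply Ck_const].
  intros x _; eapply is_derive_eq; [apply is_derive_id|reflexivity].
Qed.

Lemma Ck_plus k f g : Ck U k f -> Ck U k g -> Ck U k (fun x => f x + g x).
Proof.
  revert f g; induction k as [|k IH]; intros f g Hf Hg; simpl; auto.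
  apply Ck_S_is_derive with (fun x => Derive f x + Derive g x); [|apply IH; [apply Hf|apply Hg]].
  intros x Hx. apply (is_derive_plus f g); apply Derive_correct; [apply Hf|apply Hg]; auto.
Qed.

Lemma Ck_scal k c f : Ck U k f -> Ck U k (fun x => c * f x).
Proof.
  revert f; induction k as [|k IH]; intros f Hf; simpl; auto.
  apply Ck_S_is_derive with (fun x => c * Derive f x); [|apply IH, Hf].
  intros x Hx. apply is_derive_scal, Derive_correct, Hf, Hx.
Qed.

Lemma Ck_opp k f : Ck U k f -> Ck U k (fun x => - f x).
Proof. intros Hf. apply (Ck_ext k (fun x => -1 * f x)); [intros; ring|now apply Ck_scal]. Qed.

Lemma Ck_mult k f g : Ck U k f -> Ck U k g -> Ck U k (fun x => f x * g x).
Proof.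
  revert f g; induction k as [|k IH]; intros f g Hf Hg; simpl; auto.
  apply Ck_S_is_derive with (fun x => Derive f x * g x + f x * Derive g x).
  - intros x Hx. apply (is_derive_mult f g); try apply Derive_correct; [apply Hf|apply Hg|..]; auto.
    intros; apply Rmult_comm.
  - apply Ck_plus; apply IH; auto using Ck_pred; [apply Hf|apply Hg].
Qed.

Lemma Ck_pow k j : Ck U k (fun x => x ^ j).
Proof.
  induction j as [|j IH]; simpl; [apply Ck_const|]. apply Ck_mult; auto. apply Ck_id.
Qed.

Lemma Ck_comp V k phi f : open V -> (forall x, U x -> V (f x)) ->
  Ck V k phi -> Ck U k f -> Ck U k (fun x => phi (f x)).
Proof.
  intros HV HUV; revert phi f HUV; induction k as [|k IH]; intros phi f HUV Hp Hf; simpl; auto.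
  apply Ck_S_is_derive with (fun x => Derive f x * Derive phi (f x)).
  - intros x Hx. apply (is_derive_comp phi f); apply Derive_correct; [apply Hp|apply Hf]; auto.
  - apply Ck_mult; [apply Hf|]. apply IH; auto using Ck_pred. apply Hp.
Qed.

Lemma Ck_exp k : Ck U k exp.
Proof.
  induction k as [|k IH]; simpl; auto.
  apply Ck_S_is_derive with exp; auto. intros x _; apply is_derive_exp.
Qed.

End CkOpen.

Lemma Ck_Rinv k : Ck (fun x => x <> 0) k Rinv.
Proof.
  induction k as [|k IH]; simpl; auto.
  apply Ck_S_is_derive with (fun x => - (/ x * / x)); [apply open_neq| |].
  - intros x Hx. eapply is_derive_eq.
    + apply (is_derive_inv (fun y => y)); [apply is_derive_id|exact Hx].
    + rsimpl. field. exact Hx.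
  - apply Ck_opp, Ck_mult; auto; apply open_neq.
Qed.

Lemma Ck_inv U k f : open U -> (forall x, U x -> f x <> 0) ->
  Ck U k f -> Ck U k (fun x => / f x).
Proof. intros HU Hf. apply (Ck_comp U HU (fun x => x <> 0)); auto using open_neq, Ck_Rinv. Qed.

Lemma Ck_ln k : Ck (fun x => 0 < x) k ln.
Proof.
  destruct k as [|k]; simpl; auto.
  apply Ck_S_is_derive with Rinv; [apply open_gt| |].
  - intros x Hx. now apply is_derive_ln.
  - apply (Ck_subset (fun x => x <> 0)); [intros; lra|apply Ck_Rinv].
Qed.

Lemma Ck_Rpower k y : Ck (fun x => 0 < x) k (fun x => Rpower x y).
Proof.
  apply (Ck_comp _ (open_gt 0) (fun _ => True) k exp (fun x => y * ln x)); auto.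
  - apply open_true.
  - apply Ck_exp, open_true.
  - apply Ck_scal, Ck_ln. apply open_gt.
Qed.

(** * The flat function [exp (-1/x)] and a smooth decreasing profile *)

Definition flat (i : nat) (x : R) : R :=
  if Rle_dec x 0 then 0 else exp (- / x) * / x ^ i.

Lemma flat_nonpos i x : x <= 0 -> flat i x = 0.
Proof. intros Hx. unfold flat. destruct (Rle_dec x 0); lra. Qed.

Lemma flat_pos i x : 0 < x -> 0 < flat i x.
Proof.
  intros Hx. unfold flat. destruct (Rle_dec x 0); [lra|].
  apply Rmult_lt_0_compat; [apply exp_pos|apply Rinv_0_lt_compat, pow_lt, Hx].
Qed.

Lemma flat_ge0 i x : 0 <= flat i x.
Proof.
  destruct (Rle_dec x 0); [rewrite flat_nonpos; lra|].
  left; apply flat_pos; lra.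
Qed.

(* The Taylor bound [exp y >= y^(j+1) / (j+1)!] at [y = 1/x]. *)
Lemma flat_le_linear j x : 0 < x -> flat j x <= INR (fact (S j)) * x.
Proof.
  intros Hx. unfold flat. destruct (Rle_dec x 0); [lra|].
  assert (Hy : 0 <= / x) by (left; apply Rinv_0_lt_compat, Hx).
  assert (Htaylor : / x ^ S j / INR (fact (S j)) <= exp (/ x)).
  { eapply Rle_trans; [|apply (exp_ge_taylor (/ x) (S j) Hy)].
    rewrite tech5, pow_inv.
    enough (0 <= sum_f_R0 (fun k => (/ x) ^ k / INR (fact k)) j) by lra.
    apply cond_pos_sum. intros k. apply Rmult_le_pos; [now apply pow_le|].
    left; apply Rinv_0_lt_compat, lt_0_INR, lt_O_fact. }
  assert (Hf : 0 < INR (fact (S j))) by apply lt_0_INR, lt_O_fact.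
  assert (Hxj : 0 < x ^ j) by now apply pow_lt.
  assert (He : 0 < exp (/ x)) by apply exp_pos.
  rewrite exp_Ropp. simpl pow in Htaylor.
  apply (Rmult_le_reg_r (exp (/ x) * x ^ j)); [now apply Rmult_lt_0_compat|].
  replace (/ exp (/ x) * / x ^ j * (exp (/ x) * x ^ j)) with 1 by (field; lra).
  apply (Rmult_le_compat_l (INR (fact (S j)) * x * x ^ j)) in Htaylor;
    [|apply Rmult_le_pos; [apply Rmult_le_pos|]; lra].
  replace (INR (fact (S j)) * x * x ^ j * (/ (x * x ^ j) / INR (fact (S j)))) with 1
    in Htaylor by (field; lra).
  lra.
Qed.

Lemma is_derive_flat i x : is_derive (flat i) x (flat (S (S i)) x - INR i * flat (S i) x).
Proof.
  destruct (Rtotal_order x 0) as [Hx|[->|Hx]].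
  - rewrite !flat_nonpos by lra.
    apply (is_derive_ext_loc (fun _ => 0)).
    + eapply filter_imp; [|exact (open_lt 0 x Hx)]. intros y Hy. rewrite flat_nonpos; lra.
    + eapply is_derive_eq; [apply is_derive_const|]. rsimpl. ring.
  - (* at 0 the difference quotient is [flat (S i) h], bounded by a multiple of [h] *)
    rewrite !flat_nonpos by lra. apply is_derive_Reals. intros eps Heps.
    set (C := INR (fact (S (S i)))).
    assert (HC : 0 < C) by apply lt_0_INR, lt_O_fact.
    assert (Hd : 0 < eps / (C + 1)) by (apply Rdiv_lt_0_compat; lra).
    exists (mkposreal _ Hd). intros h Hh0 Hh. simpl in Hh.
    rewrite (flat_nonpos i 0), Rplus_0_l by lra.
    replace ((flat i h - 0) / h - (0 - INR i * 0)) with (flat i h / h) by (field; auto).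
    destruct (Rle_dec h 0) as [Hn|Hp].
    + rewrite flat_nonpos, Rdiv_0_l, Rabs_R0 by lra. lra.
    + assert (Hq : flat i h / h = flat (S i) h).
      { unfold flat. destruct (Rle_dec h 0); [lra|]. simpl. field.
        split; [now apply pow_nonzero|lra]. }
      rewrite Hq, Rabs_pos_eq by apply flat_ge0.
      rewrite Rabs_pos_eq in Hh by lra.
      eapply Rle_lt_trans; [apply flat_le_linear; lra|].
      apply Rle_lt_trans with (C * (eps / (C + 1))); [apply Rmult_le_compat_l; lra|].
      apply (Rmult_lt_reg_r (C + 1)); [lra|].
      field_simplify; nra.
  - apply (is_derive_ext_loc (fun y => exp (- / y) * / y ^ i)).
    + eapply filter_imp; [|exact (open_gt 0 x Hx)]. intros y Hy.
      unfold flat. destruct (Rle_dec y 0); [lra|reflexivity].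
    + unfold flat. destruct (Rle_dec x 0); [lra|].
      auto_derive.
      * repeat split; try lra. apply pow_nonzero; lra.
      * destruct i as [|j]; simpl; [field; lra|].
        assert (x ^ j <> 0) by (apply pow_nonzero; lra). field. lra.
Qed.

Lemma Ck_flat k i : Ck (fun _ => True) k (flat i).
Proof.
  revert i; induction k as [|k IH]; intros i; simpl; auto.
  apply Ck_S_is_derive with (fun x => flat (S (S i)) x + - INR i * flat (S i) x).
  - apply open_true.
  - intros x _. eapply is_derive_eq; [apply is_derive_flat|lra].
  - apply Ck_plus, Ck_scal; auto; apply open_true.
Qed.

Lemma is_derive_flat0_affine a b t :
  is_derive (fun t => flat 0 (a * t + b)) t (a * flat 2 (a * t + b)).
Proof.
  eapply is_derive_eq.
  - apply (is_derive_comp (flat 0) (fun t => a * t + b)); [apply is_derive_flat|].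
    auto_derive; auto.
  - rsimpl. ring.
Qed.

Lemma Ck_flat_affine k i a b : Ck (fun _ => True) k (fun t => flat i (a * t + b)).
Proof.
  pose proof (@open_true R_UniformSpace) as HT.
  apply (Ck_comp (fun _ => True) HT (fun _ => True) k); auto using Ck_flat.
  apply Ck_plus; auto using Ck_const. apply Ck_scal, Ck_id; auto.
Qed.

Definition step_den t := flat 0 (1 * t + - (3/4)) + flat 0 (-1 * t + 1).
Definition step t := flat 0 (1 * t + - (3/4)) / step_den t.
Definition dstep t :=
  (flat 2 (1 * t + - (3/4)) * flat 0 (-1 * t + 1)
   + flat 0 (1 * t + - (3/4)) * flat 2 (-1 * t + 1)) / step_den t ^ 2.

Lemma step_den_pos t : 0 < step_den t.
Proof.
  unfold step_den. destruct (Rle_dec t (3/4)).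
  - pose proof (flat_ge0 0 (1 * t + - (3/4))). pose proof (flat_pos 0 (-1 * t + 1)). lra.
  - pose proof (flat_pos 0 (1 * t + - (3/4))). pose proof (flat_ge0 0 (-1 * t + 1)). lra.
Qed.

Lemma is_derive_step t : is_derive step t (dstep t).
Proof.
  pose proof (step_den_pos t) as Hd.
  unfold step, dstep. eapply is_derive_eq.
  - apply is_derive_div; [apply is_derive_flat0_affine| |lra].
    apply (is_derive_plus (fun t => flat 0 (1 * t + - (3/4))) (fun t => flat 0 (-1 * t + 1)));
      apply is_derive_flat0_affine.
  - rsimpl. unfold step_den at 1. field. lra.
Qed.

Lemma step_le_34 t : t <= 3/4 -> step t = 0.
Proof. intros H. unfold step. rewrite flat_nonpos by lra. unfold Rdiv; ring. Qed.

Lemma step_ge_1 t : 1 <= t -> step t = 1.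
Proof.
  intros H. pose proof (step_den_pos t) as Hd. unfold step, step_den in *.
  rewrite (flat_nonpos 0 (-1 * t + 1)) in * by lra. field. lra.
Qed.

Lemma step_range t : 0 <= step t <= 1.
Proof.
  pose proof (step_den_pos t). pose proof (flat_ge0 0 (1 * t + - (3/4))).
  pose proof (flat_ge0 0 (-1 * t + 1)).
  unfold step, step_den in *. split.
  - apply Rdiv_le_0_compat; lra.
  - apply ->Rdiv_le_1; lra.
Qed.

Lemma dstep_ge0 t : 0 <= dstep t.
Proof.
  pose proof (step_den_pos t).
  pose proof (flat_ge0 2 (1 * t + - (3/4))). pose proof (flat_ge0 2 (-1 * t + 1)).
  pose proof (flat_ge0 0 (1 * t + - (3/4))). pose proof (flat_ge0 0 (-1 * t + 1)).
  unfold dstep. apply Rdiv_le_0_compat; [|now apply pow_lt].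
  apply Rplus_le_le_0_compat; now apply Rmult_le_pos.
Qed.

Lemma dstep_le_34 t : t <= 3/4 -> dstep t = 0.
Proof. intros H. unfold dstep. rewrite !(flat_nonpos _ (1 * t + - (3/4))) by lra. unfold Rdiv; ring. Qed.

Definition ramp t := 3/5 + step t * (t - 3/5).
Definition dramp t := dstep t * (t - 3/5) + step t.

Lemma is_derive_ramp t : is_derive ramp t (dramp t).
Proof.
  unfold ramp, dramp. eapply is_derive_eq.
  - apply (is_derive_plus (fun _ => 3/5) (fun t => step t * (t - 3/5))); [apply is_derive_const|].
    apply (is_derive_mult step (fun t => t - 3/5)); [apply is_derive_step|auto_derive; auto|].
    intros; apply Rmult_comm.
  - rsimpl. ring.
Qed.

Lemma Ck_ramp k : Ck (fun _ => True) k ramp.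
Proof.
  pose proof (@open_true R_UniformSpace) as HT.
  apply Ck_plus, Ck_mult; auto using Ck_const.
  - apply Ck_mult; [auto|apply Ck_flat_affine|].
    apply (Ck_inv _ k step_den HT); [intros x _; pose proof (step_den_pos x); lra|].
    apply Ck_plus; auto using Ck_flat_affine.
  - apply Ck_plus; auto using Ck_id, Ck_const.
Qed.

Lemma ramp_ge t : 3/5 <= ramp t.
Proof.
  unfold ramp. destruct (Rle_dec t (3/4)); [rewrite step_le_34 by lra; lra|].
  pose proof (step_range t). nra.
Qed.

Lemma ramp_pos t : 0 < ramp t.
Proof. pose proof (ramp_ge t). lra. Qed.

Lemma ramp_le_1 t : t <= 1 -> ramp t <= 1.
Proof.
  intros H. unfold ramp. destruct (Rle_dec t (3/4)); [rewrite step_le_34 by lra; lra|].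
  pose proof (step_range t). nra.
Qed.

Lemma ramp_ge_1 t : 1 <= t -> ramp t = t.
Proof. intros H. unfold ramp. rewrite step_ge_1 by lra. ring. Qed.

Lemma dramp_ge0 t : 0 <= dramp t.
Proof.
  unfold dramp. destruct (Rle_dec t (3/4)).
  - rewrite dstep_le_34, step_le_34 by lra. lra.
  - pose proof (step_range t). pose proof (dstep_ge0 t). nra.
Qed.

Lemma dramp_ge_1 t : 1 <= t -> 0 < dramp t.
Proof.
  intros H. unfold dramp. rewrite step_ge_1 by lra. pose proof (dstep_ge0 t). nra.
Qed.

Lemma Ck_Rpower_ramp k b : Ck (fun _ => True) k (fun t => Rpower (ramp t) (- b)).
Proof.
  apply (Ck_comp (fun _ => True) open_true (fun x => 0 < x) k (fun x => Rpower x (- b)) ramp).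
  - apply open_gt.
  - intros x _; apply ramp_pos.
  - apply Ck_Rpower.
  - apply Ck_ramp.
Qed.

Definition bump t := flat 0 (-1 * t + 1).
Definition profile b c t := Rpower (ramp t) (- b) + c * bump t.
Definition dprofile b c t :=
  - b * Rpower (ramp t) (- b - 1) * dramp t + c * (-1 * flat 2 (-1 * t + 1)).

Lemma is_derive_profile b c t : is_derive (profile b c) t (dprofile b c t).
Proof.
  unfold profile, dprofile. eapply is_derive_eq.
  - apply (is_derive_plus (fun t => Rpower (ramp t) (- b)) (fun t => c * bump t)).
    + apply (is_derive_comp (fun x => Rpower x (- b)) ramp); [|apply is_derive_ramp].
      apply is_derive_Reals, derivable_pt_lim_power, ramp_pos.
    + apply is_derive_scal, is_derive_flat0_affine.
  - rsimpl. ring.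
Qed.

Lemma Ck_profile k b c : Ck (fun _ => True) k (profile b c).
Proof.
  apply Ck_plus; [apply open_true|apply Ck_Rpower_ramp|].
  apply Ck_scal, Ck_flat_affine. apply open_true.
Qed.

Lemma profile_pos b c t : 0 <= c -> 0 < profile b c t.
Proof.
  intros Hc. unfold profile. pose proof (exp_pos (- b * ln (ramp t))).
  pose proof (flat_ge0 0 (-1 * t + 1)). unfold Rpower, bump. nra.
Qed.

Lemma dprofile_neg b c t : 0 < b -> 0 < c -> dprofile b c t < 0.
Proof.
  intros Hb Hc. unfold dprofile.
  pose proof (exp_pos ((- b - 1) * ln (ramp t))) as Hp. fold (Rpower (ramp t) (- b - 1)) in Hp.
  pose proof (dramp_ge0 t). pose proof (flat_ge0 2 (-1 * t + 1)).
  destruct (Rlt_dec t 1).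
  - pose proof (flat_pos 2 (-1 * t + 1) ltac:(lra)).
    assert (0 <= b * Rpower (ramp t) (- b - 1) * dramp t) by (apply Rmult_le_pos; nra).
    nra.
  - pose proof (dramp_ge_1 t ltac:(lra)).
    assert (0 < b * Rpower (ramp t) (- b - 1) * dramp t) by (apply Rmult_lt_0_compat; nra).
    nra.
Qed.

Lemma profile_decreasing b c x y : 0 < b -> 0 < c -> x < y -> profile b c y < profile b c x.
Proof.
  intros Hb Hc Hxy.
  destruct (MVT_gen (profile b c) x y (dprofile b c)) as [z [Hz Heq]].
  - intros z _. apply is_derive_profile.
  - intros z _. apply continuity_pt_filterlim.
    apply (Ck_continuous (fun _ => True) 0); [apply Ck_profile|exact I].
  - pose proof (dprofile_neg b c z Hb Hc). nra.
Qed.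

Lemma profile_ge_1 b c t : 1 <= t -> profile b c t = Rpower t (- b).
Proof.
  intros H. unfold profile, bump. rewrite ramp_ge_1, flat_nonpos by lra. ring.
Qed.

Lemma Rpower_ramp_le b t : 0 < b <= 2 -> t <= 1 -> Rpower (ramp t) (- b) <= 25 / 9.
Proof.
  intros Hb Ht. pose proof (ramp_ge t). pose proof (ramp_le_1 t Ht).
  assert (Hl : ln (3/5) <= ln (ramp t) <= 0) by (rewrite <- ln_1; split; apply ln_le; lra).
  assert (H25 : 25 / 9 = exp (-2 * ln (3/5))).
  { replace (-2 * ln (3/5)) with (ln (/ (3/5) * / (3/5))) by (rewrite ln_mult, ln_Rinv by lra; ring).
    rewrite exp_ln; lra. }
  rewrite H25. unfold Rpower.
  assert (Hle : - b * ln (ramp t) <= -2 * ln (3/5)) by nra.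
  destruct Hle as [Hlt|Heq]; [left; now apply exp_increasing|rewrite Heq; lra].
Qed.

Lemma continuous_Ck f x : Ck (fun _ => True) 1 f -> continuous f x.
Proof. intros Hf. now apply (Ck_continuous (fun _ => True) 0). Qed.

Lemma ex_RInt_Ck f a b : Ck (fun _ => True) 1 f -> ex_RInt f a b.
Proof.
  intros Hf. apply (ex_RInt_continuous (V := R_CompleteNormedModule)).
  intros x _. now apply continuous_Ck.
Qed.

Lemma RInt_antiderivative (f F : R -> R) a b :
  (forall x, Rmin a b <= x <= Rmax a b -> is_derive F x (f x)) ->
  Ck (fun _ => True) 1 f -> RInt f a b = F b - F a.
Proof.
  intros HF Hf. apply (is_RInt_unique (V := R_CompleteNormedModule)).
  apply (is_RInt_derive (V := R_CompleteNormedModule) F f); auto.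
  intros x _. now apply continuous_Ck.
Qed.

Lemma RInt_pow2 a : RInt (fun v => v ^ 2) 0 a = a ^ 3 / 3.
Proof.
  rewrite (RInt_antiderivative _ (fun v => v ^ 3 / 3)).
  - simpl; field.
  - intros x _. auto_derive; auto. field.
  - apply Ck_pow, open_true.
Qed.

Lemma Ck_pow_mult_comp k j t f :
  Ck (fun _ => True) k f -> Ck (fun _ => True) k (fun v => v ^ j * f (t * v ^ 2)).
Proof.
  pose proof (@open_true R_UniformSpace) as HT. intros Hf.
  apply Ck_mult; auto using Ck_pow.
  apply (Ck_comp (fun _ => True) HT (fun _ => True) k); auto.
  apply Ck_scal, Ck_pow; auto.
Qed.

(* [t^((j+1)/2) * moment j f t] is [\int_0^sqrt(t) s^j f(s^2) ds]; the rescaled form is smooth in [t]. *)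
Definition moment (j : nat) (f : R -> R) (t : R) : R := RInt (fun v => v ^ j * f (t * v ^ 2)) 0 1.

Lemma ex_RInt_moment j f t : Ck (fun _ => True) 1 f -> ex_RInt (fun v => v ^ j * f (t * v ^ 2)) 0 1.
Proof. intros Hf. now apply ex_RInt_Ck, Ck_pow_mult_comp. Qed.

Lemma continuity_2d_pt_pow j x y : continuity_2d_pt (fun _ v => v ^ j) x y.
Proof.
  apply (continuity_1d_2d_pt_comp (fun v => v ^ j) (fun _ v => v)); [|apply continuity_2d_pt_id2].
  apply continuity_pt_filterlim, continuous_Ck, Ck_pow, open_true.
Qed.

Lemma is_derive_moment j f x :
  Ck (fun _ => True) 2 f -> is_derive (moment j f) x (moment (S (S j)) (Derive f) x).
Proof.
  intros [Hf1 [Hf2 _]].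
  assert (Hd : forall u v, is_derive (fun z => v ^ j * f (z * v ^ 2)) u
                             (v ^ j * (v ^ 2 * Derive f (u * v ^ 2)))).
  { intros u v. apply is_derive_scal. eapply is_derive_eq.
    - apply (is_derive_comp f (fun z => z * v ^ 2)); [now apply Derive_correct, Hf1|].
      auto_derive; auto.
    - rsimpl. ring. }
  unfold moment. eapply is_derive_eq.
  - apply (is_derive_RInt_param (fun u v => v ^ j * f (u * v ^ 2)) 0 1 x).
    + apply filter_forall. intros y t _. eexists; apply Hd.
    + intros t _. apply (continuity_2d_pt_ext (fun u v => v ^ j * (v ^ 2 * Derive f (u * v ^ 2)))).
      * intros u v. symmetry; apply is_derive_unique, Hd.
      * apply continuity_2d_pt_mult; [apply continuity_2d_pt_pow|].
        apply continuity_2d_pt_mult; [apply continuity_2d_pt_pow|].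
        apply (continuity_1d_2d_pt_comp (Derive f) (fun u v => u * v ^ 2)).
        -- apply continuity_pt_filterlim, (ex_derive_continuous (Derive f)), Hf2. exact I.
        -- apply continuity_2d_pt_mult; [apply continuity_2d_pt_id1|apply continuity_2d_pt_pow].
    + apply filter_forall. intros y. apply ex_RInt_Ck, Ck_pow_mult_comp.
      split; [exact Hf1|exact I].
  - apply RInt_ext. intros v _.
    rewrite (is_derive_unique (fun u : R => v ^ j * f (u * v ^ 2)) x _ (Hd x v)). simpl. ring.
Qed.

Lemma Ck_moment k j f : Ck (fun _ => True) (k + 2) f -> Ck (fun _ => True) k (moment j f).
Proof.
  revert j f; induction k as [|k IH]; intros j f Hf; simpl; auto.
  apply Ck_S_is_derive with (moment (S (S j)) (Derive f)); [apply open_true| |].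
  - intros x _. apply is_derive_moment, (Ck_le _ (S k + 2)); auto. lia.
  - apply IH, Hf.
Qed.

(** * Inverse functions and power limits *)

Lemma is_derive_inverse (f f' g : R -> R) (a b y : R) :
  a < b ->
  (forall x, a <= x <= b -> is_derive f x (f' x)) ->
  (forall x z, a <= x -> x < z -> z <= b -> f x < f z) ->
  (forall z, f a <= z <= f b -> a <= g z <= b /\ f (g z) = z) ->
  f a < y < f b -> f' (g y) <> 0 ->
  is_derive g y (/ f' (g y)).
Proof.
  intros Hab Hf Hincr Hg Hy Hf'.
  assert (Hgab : forall z, f a <= z <= f b -> a <= g z <= b) by (intros; now apply Hg).
  assert (Hmono : forall z w, f a <= z <= f b -> f a <= w <= f b -> z <= w -> g z <= g w).
  { intros z w Hz Hw Hzw. destruct (Rle_dec (g z) (g w)) as [|Hlt]; auto.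
    destruct (Hg z Hz) as [Hz1 Hz2], (Hg w Hw) as [Hw1 Hw2].
    pose proof (Hincr (g w) (g z) ltac:(lra) ltac:(lra) ltac:(lra)). lra. }
  assert (Hder : forall x, g (f a) <= x <= g (f b) -> derivable_pt f x).
  { intros x Hx. apply ex_derive_Reals_0. exists (f' x). apply Hf.
    pose proof (Hgab (f a) ltac:(lra)). pose proof (Hgab (f b) ltac:(lra)). lra. }
  assert (Hgy : g (f a) <= g y <= g (f b)) by (split; apply Hmono; lra).
  assert (Hcont : continuity_pt g y).
  { apply (continuity_pt_recip_interv f g a b); [lra|auto| | | |lra].
    - intros z Hz1 Hz2. unfold comp, id. apply Hg; lra.
    - intros z Hz1 Hz2. apply Hg; lra.
    - intros x Hx. apply continuity_pt_filterlim, (ex_derive_continuous f). eexists; now apply Hf. }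
  assert (Hdf : derive_pt f (g y) (Hder (g y) Hgy) = f' (g y)).
  { rewrite Derive_Reals. apply is_derive_unique, Hf. apply Hgab. lra. }
  pose proof (derivable_pt_lim_recip_interv f g (f a) (f b) y Hder Hcont ltac:(lra) Hy Hgy
    ltac:(intros z Hz; unfold comp, id; apply Hg; lra) ltac:(now rewrite Hdf)) as Hlim.
  rewrite Hdf in Hlim. apply is_derive_Reals in Hlim.
  eapply is_derive_eq; [exact Hlim|field; exact Hf'].
Qed.

Lemma is_derive_inverse_decr (f f' g : R -> R) (a b y : R) :
  a < b ->
  (forall x, a <= x <= b -> is_derive f x (f' x)) ->
  (forall x z, a <= x -> x < z -> z <= b -> f z < f x) ->
  (forall z, f b <= z <= f a -> a <= g z <= b /\ f (g z) = z) ->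
  f b < y < f a -> f' (g y) <> 0 ->
  is_derive g y (/ f' (g y)).
Proof.
  intros Hab Hf Hdecr Hg Hy Hf'.
  pose proof (is_derive_inverse (fun x => - f x) (fun x => - f' x) (fun z => g (- z)) a b (- y) Hab)
    as Hneg.
  cbv beta in Hneg. rewrite Ropp_involutive in Hneg.
  apply (is_derive_ext (fun y => g (- - y))); [intros t; now rewrite Ropp_involutive|].
  eapply is_derive_eq.
  - apply (is_derive_comp (fun z => g (- z)) (fun y => - y) y (/ - f' (g y)) (-1)).
    + apply Hneg.
      * intros x Hx. eapply is_derive_eq; [apply (is_derive_opp f), Hf, Hx|now rsimpl].
      * intros x z Hx Hxz Hz. pose proof (Hdecr x z Hx Hxz Hz). lra.
      * intros z Hz. destruct (Hg (- z)) as [Hgz Hfgz]; [lra|]. split; [exact Hgz|lra].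
      * lra.
      * lra.
    + auto_derive; auto.
  - rsimpl. field. exact Hf'.
Qed.

Lemma Rpower_base_1 y : Rpower 1 y = 1.
Proof. unfold Rpower. now rewrite ln_1, Rmult_0_r, exp_0. Qed.

Lemma Rbar_mult_pos_p_infty (c : R) : 0 < c -> Rbar_mult c p_infty = p_infty.
Proof. intros Hc. now apply is_Rbar_mult_unique, is_Rbar_mult_sym, is_Rbar_mult_p_infty_pos. Qed.

Lemma is_lim_scal_Rpower_pos c a :
  0 < c -> 0 < a -> is_lim (fun r => c * Rpower r a) p_infty p_infty.
Proof.
  intros Hc Ha. rewrite <- (Rbar_mult_pos_p_infty c Hc) at 2. apply is_lim_scal_l. unfold Rpower.
  apply (is_lim_comp exp (fun r => a * ln r) p_infty p_infty p_infty).
  - apply is_lim_exp_p.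
  - rewrite <- (Rbar_mult_pos_p_infty a Ha) at 2. apply is_lim_scal_l, is_lim_ln_p.
  - apply filter_forall. discriminate.
Qed.

Lemma is_lim_scal_Rpower_neg c a : a < 0 -> is_lim (fun r => c * Rpower r a) p_infty 0.
Proof.
  intros Ha. replace (Finite 0) with (Rbar_mult c 0) by (simpl; f_equal; ring).
  apply is_lim_scal_l. unfold Rpower.
  apply (is_lim_comp exp (fun r => a * ln r) p_infty 0 m_infty).
  - apply is_lim_exp_m.
  - replace m_infty with (Rbar_mult a p_infty)
      by (apply is_Rbar_mult_unique, is_Rbar_mult_sym, is_Rbar_mult_p_infty_neg; simpl; lra).
    apply is_lim_scal_l, is_lim_ln_p.
  - apply filter_forall. discriminate.
Qed.

Lemma moment_profile b c t :
  moment 2 (profile b c) t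
  = moment 2 (fun t => Rpower (ramp t) (- b)) t + c * moment 2 bump t.
Proof.
  unfold moment, profile.
  rewrite (RInt_ext _ (fun v => plus (v ^ 2 * Rpower (ramp (t * v ^ 2)) (- b))
                                      (scal c (v ^ 2 * bump (t * v ^ 2)))))
    by (intros; rsimpl; ring).
  rewrite (RInt_plus (V := R_CompleteNormedModule)).
  - rewrite (RInt_scal (V := R_CompleteNormedModule)); [now rsimpl|].
    apply (ex_RInt_moment 2 bump), Ck_flat_affine.
  - apply (ex_RInt_moment 2 (fun t => Rpower (ramp t) (- b))), Ck_Rpower_ramp.
  - apply (ex_RInt_scal (V := R_CompleteNormedModule)), (ex_RInt_moment 2 bump), Ck_flat_affine.
Qed.

Lemma moment_Rpower_ramp_le b : 0 < b <= 2 -> moment 2 (fun t => Rpower (ramp t) (- b)) 1 <= 25 / 27.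
Proof.
  intros Hb. unfold moment.
  apply Rle_trans with (RInt (fun v => scal (25 / 9) (v ^ 2)) 0 1).
  - apply RInt_le; [lra| | |].
    + apply (ex_RInt_moment 2 (fun t => Rpower (ramp t) (- b))), Ck_Rpower_ramp.
    + apply (ex_RInt_scal (V := R_CompleteNormedModule)), ex_RInt_Ck, Ck_pow, open_true.
    + intros v Hv. rsimpl. rewrite Rmult_comm. apply Rmult_le_compat_r; [nra|].
      apply Rpower_ramp_le; [lra|]. simpl. nra.
  - rewrite (RInt_scal (V := R_CompleteNormedModule)), RInt_pow2.
    + rsimpl. lra.
    + apply ex_RInt_Ck, Ck_pow, open_true.
Qed.

Lemma moment_pos j f t : Ck (fun _ => True) 1 f -> (forall x, 0 < f x) -> 0 < moment j f t.
Proof.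
  intros Hf Hpos. apply RInt_gt_0; [lra| |].
  - intros v Hv. apply Rmult_lt_0_compat; [apply pow_lt; lra|apply Hpos].
  - intros v _. now apply continuous_Ck, Ck_pow_mult_comp.
Qed.

Lemma moment_bump_pos : 0 < moment 2 bump 1.
Proof.
  apply RInt_gt_0; [lra| |].
  - intros v Hv. apply Rmult_lt_0_compat; [apply pow_lt; lra|].
    apply flat_pos. simpl. nra.
  - intros v _. apply continuous_Ck, (Ck_pow_mult_comp 1 2 1 bump), Ck_flat_affine.
Qed.

(** * The steady state *)

Section Construction.

Variable n : R.
Hypothesis hn : 3 < n.

Definition beta := n / (n - 1).
Definition core_mass := (n - 1) / (n - 3).
(* Chosen so that [moment 2 dens 1 = core_mass]; it is positive because the floor [3/5] of [ramp]
   bounds the power part's contribution by [25/27 < 1 < core_mass]. *)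
Definition bump_weight :=
  (core_mass - moment 2 (fun t => Rpower (ramp t) (- beta)) 1) / moment 2 bump 1.
Definition dens := profile beta bump_weight.
Definition ddens := dprofile beta bump_weight.

Lemma beta_bounds : 1 < beta < 3/2.
Proof. unfold beta. split; [apply Rlt_div_r|apply Rlt_div_l]; lra. Qed.

Lemma core_mass_exponent : core_mass * (3 - 2 * beta) = 1.
Proof. unfold core_mass, beta. field. lra. Qed.

Lemma bump_weight_pos : 0 < bump_weight.
Proof.
  pose proof beta_bounds. pose proof moment_bump_pos.
  pose proof (moment_Rpower_ramp_le beta ltac:(lra)).
  assert (1 < core_mass) by (unfold core_mass; apply Rlt_div_r; lra).
  apply Rdiv_lt_0_compat; lra.
Qed.

Lemma moment_dens_1 : moment 2 dens 1 = core_mass.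
Proof.
  pose proof moment_bump_pos. unfold dens. rewrite moment_profile.
  unfold bump_weight. field. lra.
Qed.

Lemma Ck_dens k : Ck (fun _ => True) k dens.
Proof. apply Ck_profile. Qed.

Lemma dens_pos t : 0 < dens t.
Proof. apply profile_pos. left; apply bump_weight_pos. Qed.

Lemma is_derive_dens t : is_derive dens t (ddens t).
Proof. apply is_derive_profile. Qed.

Lemma ddens_neg t : ddens t < 0.
Proof. pose proof beta_bounds. apply dprofile_neg; [lra|apply bump_weight_pos]. Qed.

Lemma Ck_ddens k : Ck (fun _ => True) k ddens.
Proof.
  apply (Ck_ext _ open_true k (Derive dens)); [intros t _; apply is_derive_unique, is_derive_dens|].
  apply (Ck_dens (S k)).
Qed.

Lemma dens_decreasing x y : x < y -> dens y < dens x.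
Proof. pose proof beta_bounds. apply profile_decreasing; [lra|apply bump_weight_pos]. Qed.

Lemma dens_ge_1 t : 1 <= t -> dens t = Rpower t (- beta).
Proof. apply profile_ge_1. Qed.

Definition mass_scaled t := 4 * PI * moment 2 dens t.

Lemma Ck_mass_scaled k : Ck (fun _ => True) k mass_scaled.
Proof. apply Ck_scal, Ck_moment, Ck_dens. apply open_true. Qed.

Lemma mass_scaled_pos t : 0 < mass_scaled t.
Proof.
  pose proof PI_RGT_0. apply Rmult_lt_0_compat; [lra|].
  apply moment_pos; [apply Ck_dens|apply dens_pos].
Qed.

Lemma Ck_integrand_mass k : Ck (fun _ => True) k (fun s => s ^ 2 * dens (s ^ 2)).
Proof.
  apply (Ck_ext _ open_true k (fun s => s ^ 2 * dens (1 * s ^ 2))); [intros; now rewrite Rmult_1_l|].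
  apply Ck_pow_mult_comp, Ck_dens.
Qed.

(* The substitution [s = r v] turns [mass] into a moment of [dens]. *)
Lemma mass_dens r : mass (fun r => dens (r ^ 2)) r = r ^ 3 * mass_scaled (r ^ 2).
Proof.
  unfold mass, mass_scaled, moment.
  pose proof (RInt_comp_lin (V := R_CompleteNormedModule) (fun s => s ^ 2 * dens (s ^ 2)) r 0 0 1
                (ex_RInt_Ck _ _ _ (Ck_integrand_mass 1))) as Hsub.
  replace (r * 0 + 0) with 0 in Hsub by ring. replace (r * 1 + 0) with r in Hsub by ring.
  rewrite <- Hsub.
  rewrite (RInt_ext _ (fun v => scal (r ^ 3) (v ^ 2 * dens (r ^ 2 * v ^ 2))))
    by (intros; rsimpl; replace ((r * x + 0) * ((r * x + 0) * 1)) with (r * (r * 1) * (x * (x * 1)))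
          by ring; ring).
  rewrite (RInt_scal (V := R_CompleteNormedModule)); [rsimpl; ring|].
  apply (ex_RInt_moment 2 dens), Ck_dens.
Qed.

Lemma mass_dens_ge_1 r : 1 <= r ->
  mass (fun r => dens (r ^ 2)) r = 4 * PI * core_mass * Rpower r (3 - 2 * beta).
Proof.
  intros Hr. pose proof core_mass_exponent as He. pose proof beta_bounds.
  assert (Hcore : @eq R (RInt (fun s => s ^ 2 * dens (s ^ 2)) 0 1) core_mass).
  { rewrite <- moment_dens_1. apply RInt_ext. intros; now rewrite Rmult_1_l. }
  assert (Htail : @eq R (RInt (fun s => s ^ 2 * dens (s ^ 2)) 1 r)
                        (core_mass * (Rpower r (3 - 2 * beta) - 1))).
  { rewrite (RInt_antiderivative _ (fun s => core_mass * Rpower s (3 - 2 * beta)));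
      [rewrite Rpower_base_1; ring| |apply Ck_integrand_mass].
    intros x Hx. rewrite Rmin_left, Rmax_right in Hx by lra.
    eapply is_derive_eq.
    - apply is_derive_scal, is_derive_Reals, derivable_pt_lim_power. lra.
    - rewrite dens_ge_1 by (simpl; nra).
      rewrite <- (Rpower_pow 2 x), Rpower_mult, <- Rpower_plus by lra.
      replace (3 - 2 * beta - 1) with (INR 2 + INR 2 * - beta) by (simpl; ring).
      now rewrite <- Rmult_assoc, He, Rmult_1_l. }
  unfold mass; cbv beta. rewrite <- (RInt_Chasles (V := R_CompleteNormedModule) _ 0 1 r)
    by apply ex_RInt_Ck, Ck_integrand_mass.
  rewrite Hcore, Htail. rsimpl. ring.
Qed.

Lemma mass_scaled_ge_1 t : 1 <= t -> mass_scaled t = 4 * PI * core_mass * Rpower t (- beta).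
Proof.
  intros Ht. set (r := sqrt t).
  assert (Hr : 1 <= r) by (unfold r; rewrite <- sqrt_1; apply sqrt_le_1_alt; lra).
  assert (Hrt : r ^ 2 = t) by (unfold r; apply pow2_sqrt; lra).
  pose proof (mass_dens r) as Hm. rewrite mass_dens_ge_1, Hrt in Hm by lra.
  assert (Hr3 : r ^ 3 = Rpower r 3) by (rewrite <- (Rpower_pow 3 r) by lra; f_equal; simpl; ring).
  apply (Rmult_eq_reg_l (r ^ 3)); [|apply pow_nonzero; lra].
  rewrite <- Hm, Hr3, <- Hrt, <- (Rpower_pow 2 r) by lra.
  rewrite Rpower_mult. replace (Rpower r (3 - 2 * beta)) with (Rpower r 3 * Rpower r (INR 2 * - beta)).
  - ring.
  - rewrite <- Rpower_plus. f_equal. simpl. ring.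
Qed.

Definition pres_const := 4 * PI * (n - 1) ^ 2 / (2 * (n + 1) * (n - 3)).
Definition pres t : R := pres_const + RInt (fun u => dens u * mass_scaled u / 2) t 1.

Lemma pres_const_pos : 0 < pres_const.
Proof.
  pose proof PI_RGT_0. unfold pres_const. apply Rdiv_lt_0_compat; [|nra].
  apply Rmult_lt_0_compat; [lra|apply pow_lt; lra].
Qed.

Lemma Ck_pres_integrand k : Ck (fun _ => True) k (fun u => dens u * mass_scaled u / 2).
Proof.
  pose proof (@open_true R_UniformSpace) as HT.
  apply (Ck_ext _ HT k (fun u => / 2 * (dens u * mass_scaled u))); [intros; field|].
  apply Ck_scal, Ck_mult; auto using Ck_dens, Ck_mass_scaled.
Qed.

Lemma is_derive_pres t : is_derive pres t (- (dens t * mass_scaled t / 2)).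
Proof.
  unfold pres. eapply is_derive_eq.
  - apply (is_derive_plus (fun _ => pres_const)); [apply is_derive_const|].
    apply (is_derive_RInt' (V := R_NormedModule) (fun u => dens u * mass_scaled u / 2) _ t 1).
    + apply filter_forall. intros a. apply (RInt_correct (V := R_CompleteNormedModule)).
      apply ex_RInt_Ck, Ck_pres_integrand.
    + apply continuous_Ck, Ck_pres_integrand.
  - rsimpl. ring.
Qed.

Lemma Ck_pres k : Ck (fun _ => True) k pres.
Proof.
  destruct k as [|k]; simpl; auto.
  apply (Ck_S_is_derive _ open_true k pres (fun t => - (dens t * mass_scaled t / 2))).
  - intros t _. apply is_derive_pres.
  - apply Ck_opp, Ck_pres_integrand. apply open_true.
Qed.

Lemma pres_ge_1 t : 1 <= t -> pres t = pres_const * Rpower t (1 - 2 * beta).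
Proof.
  intros Ht. pose proof beta_bounds.
  set (K := 4 * PI * core_mass).
  assert (Hconst : pres_const = K / (2 * (2 * beta - 1))).
  { unfold K, pres_const, core_mass, beta. field. lra. }
  assert (Htail : @eq R (RInt (fun u => dens u * mass_scaled u / 2) 1 t)
                        (K / 2 * ((Rpower t (1 - 2 * beta) - 1) / (1 - 2 * beta)))).
  { rewrite (RInt_antiderivative _ (fun u => K / 2 * (Rpower u (1 - 2 * beta) / (1 - 2 * beta))));
      [rewrite Rpower_base_1; field; lra| |apply Ck_pres_integrand].
    intros x Hx. rewrite Rmin_left, Rmax_right in Hx by lra.
    rewrite dens_ge_1, mass_scaled_ge_1 by lra. fold K.
    eapply is_derive_eq.
    - apply is_derive_scal, (is_derive_ext (fun u => / (1 - 2 * beta) * Rpower u (1 - 2 * beta)));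
        [intros; apply Rmult_comm|].
      apply is_derive_scal, is_derive_Reals, derivable_pt_lim_power. lra.
    - replace (1 - 2 * beta - 1) with (- beta + - beta) by ring. rewrite Rpower_plus.
      field. lra. }
  unfold pres. rewrite <- (opp_RInt_swap (V := R_CompleteNormedModule))
    by apply ex_RInt_Ck, Ck_pres_integrand.
  rewrite Htail, Hconst. rsimpl. field. lra.
Qed.

Lemma pres_pos t : 0 < pres t.
Proof.
  pose proof pres_const_pos. destruct (Rle_dec t 1).
  - enough (0 <= RInt (fun u => dens u * mass_scaled u / 2) t 1) by (unfold pres; lra).
    apply RInt_ge_0; [lra|apply ex_RInt_Ck, Ck_pres_integrand|].
    intros x _. pose proof (dens_pos x). pose proof (mass_scaled_pos x).
    apply Rdiv_le_0_compat; [nra|lra].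
  - rewrite pres_ge_1 by lra. apply Rmult_lt_0_compat; [lra|apply exp_pos].
Qed.

Lemma dens_1 : dens 1 = 1.
Proof. rewrite dens_ge_1 by lra. apply Rpower_base_1. Qed.

Lemma dens_Rpower_inv x : 0 < x < 1 -> 1 < Rpower x (- / beta) /\ dens (Rpower x (- / beta)) = x.
Proof.
  intros Hx. pose proof beta_bounds.
  assert (HT : 1 < Rpower x (- / beta)).
  { rewrite <- exp_0. apply exp_increasing.
    assert (ln x < 0) by (rewrite <- ln_1; apply ln_increasing; lra).
    assert (0 < / beta) by (apply Rinv_0_lt_compat; lra). nra. }
  split; [exact HT|]. rewrite dens_ge_1, Rpower_mult by lra.
  replace (- / beta * - beta) with 1 by (field; lra). apply Rpower_1; lra.
Qed.

Lemma dens_surj y : 0 < y < dens 0 -> exists T, 0 < T /\ dens T = y.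
Proof.
  intros Hy. pose proof beta_bounds.
  destruct (Rlt_dec y 1) as [Hy1|Hy1].
  - exists (Rpower y (- / beta)). destruct (dens_Rpower_inv y) as [HT HdT]; [lra|].
    split; [lra|exact HdT].
  - destruct (IVT_cor (fun t => dens t - y) 0 1) as [z [Hz Hdz]].
    + intros x. apply continuity_pt_minus; [|apply continuity_pt_const; intros ? ?; auto].
      apply continuity_pt_filterlim, continuous_Ck, Ck_dens.
    + lra.
    + rewrite dens_1. nra.
    + exists z. split; [|lra]. destruct (Req_dec z 0) as [->|]; lra.
Qed.

(* Only meaningful for [0 < y < dens 0]; elsewhere [epsilon] returns an unspecified value. *)
Definition dens_inv y := epsilon (inhabits 0) (fun T => 0 < T /\ dens T = y).

Lemma dens_inv_spec y : 0 < y < dens 0 -> 0 < dens_inv y /\ dens (dens_inv y) = y.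
Proof. intros Hy. unfold dens_inv. apply epsilon_spec, dens_surj, Hy. Qed.

Lemma dens_inv_dens T : 0 < T -> dens_inv (dens T) = T.
Proof.
  intros HT. destruct (dens_inv_spec (dens T)) as [Hpos Heq].
  - split; [apply dens_pos|apply dens_decreasing, HT].
  - destruct (Rtotal_order (dens_inv (dens T)) T) as [Hlt|[Heq'|Hlt]]; auto.
    + pose proof (dens_decreasing _ _ Hlt). lra.
    + pose proof (dens_decreasing _ _ Hlt). lra.
Qed.

Lemma dens_inv_between y a b : 0 < a -> dens b <= y <= dens a ->
  a <= dens_inv y <= b /\ dens (dens_inv y) = y.
Proof.
  intros Ha Hy.
  assert (Hy0 : 0 < y < dens 0) by (pose proof (dens_pos b); pose proof (dens_decreasing 0 a Ha); lra).
  destruct (dens_inv_spec y Hy0) as [Hpos Heq]. split; [|exact Heq].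
  split; apply Rnot_lt_le; intros Hlt; pose proof (dens_decreasing _ _ Hlt); lra.
Qed.

Lemma is_derive_dens_inv y : 0 < y < dens 0 -> is_derive dens_inv y (/ ddens (dens_inv y)).
Proof.
  intros Hy. destruct (dens_inv_spec y Hy) as [HT HdT]. set (T := dens_inv y) in *.
  apply (is_derive_inverse_decr dens ddens dens_inv (T / 2) (2 * T)).
  - lra.
  - intros x _. apply is_derive_dens.
  - intros x z _ Hxz _. now apply dens_decreasing.
  - intros z Hz. apply dens_inv_between; [lra|exact Hz].
  - rewrite <- HdT. split; apply dens_decreasing; lra.
  - apply Rlt_not_eq, ddens_neg.
Qed.

Lemma Ck_comp_dens_inv k phi :
  Ck (fun x => 0 < x) k phi -> Ck (fun y => 0 < y < dens 0) k (fun y => phi (dens_inv y)).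
Proof.
  assert (HU : open (fun y => 0 < y < dens 0)) by (apply open_and; [apply open_gt|apply open_lt]).
  revert phi; induction k as [|k IH]; intros phi Hphi; simpl; auto.
  destruct Hphi as [Hd Hphi].
  apply (Ck_S_is_derive _ HU k _ (fun y => (fun t => Derive phi t * / ddens t) (dens_inv y))).
  - intros y Hy. destruct (dens_inv_spec y Hy) as [HT _].
    eapply is_derive_eq.
    + apply (is_derive_comp phi dens_inv); [apply Derive_correct, Hd, HT|now apply is_derive_dens_inv].
    + rsimpl. ring.
  - apply (IH (fun t => Derive phi t * / ddens t)), Ck_mult; auto; [apply open_gt|].
    apply Ck_inv; [apply open_gt|intros t _; pose proof (ddens_neg t); lra|].
    apply (Ck_subset (fun _ => True)); auto using Ck_ddens.
Qed.

Definition rho r := dens (r ^ 2).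
Definition pressure r := pres (r ^ 2).
Definition eos x := pres (dens_inv x).

Lemma is_derive_rho r : is_derive rho r (2 * r * ddens (r ^ 2)).
Proof.
  unfold rho. eapply is_derive_eq.
  - apply (is_derive_comp dens (fun r => r ^ 2)); [apply is_derive_dens|auto_derive; auto].
  - rsimpl. ring.
Qed.

Lemma Derive_rho_neg r : 0 < r -> Derive rho r < 0.
Proof.
  intros Hr. rewrite (is_derive_unique _ _ _ (is_derive_rho r)).
  pose proof (ddens_neg (r ^ 2)). nra.
Qed.

Lemma Derive2_rho_0 : Derive_n rho 2 0 < 0.
Proof.
  simpl. rewrite (Derive_ext _ (fun r => 2 * r * ddens (r ^ 2)))
    by (intros; apply is_derive_unique, is_derive_rho).
  rewrite (is_derive_unique _ 0 (2 * ddens (0 ^ 2))).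
  - pose proof (ddens_neg (0 ^ 2)). lra.
  - eapply is_derive_eq.
    + apply (is_derive_mult (fun r => 2 * r) (fun r => ddens (r ^ 2))); [auto_derive; auto| |].
      * apply Derive_correct, (ex_derive_comp ddens (fun r => r ^ 2)); [apply (Ck_ddens 1); exact I|auto_derive; auto].
      * intros; apply Rmult_comm.
    + rsimpl. ring.
Qed.

Lemma rho_gt_1 r : 1 < r -> rho r = Rpower r (- (2 * n / (n - 1))).
Proof.
  intros Hr. unfold rho. rewrite dens_ge_1 by (simpl; nra).
  rewrite <- (Rpower_pow 2 r), Rpower_mult by lra. f_equal. unfold beta. simpl. field. lra.
Qed.

Lemma is_derive_pressure_mass r :
  is_derive pressure r (- (r * dens (r ^ 2) * mass_scaled (r ^ 2))).
Proof.
  unfold pressure. eapply is_derive_eq.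
  - apply (is_derive_comp pres (fun r => r ^ 2)); [apply is_derive_pres|auto_derive; auto].
  - rsimpl. field.
Qed.

(* At [s = 0] both sides vanish, the left one because Rocq's [/ 0] is [0]. *)
Lemma pressure_integrand s : / s ^ 2 * mass rho s * rho s = s * dens (s ^ 2) * mass_scaled (s ^ 2).
Proof.
  unfold rho. rewrite mass_dens. destruct (Req_dec s 0) as [->|Hs].
  - simpl. ring.
  - field. exact Hs.
Qed.

Lemma is_derive_pressure r : 0 < r -> is_derive pressure r (- (rho r * mass rho r / r ^ 2)).
Proof.
  intros Hr. eapply is_derive_eq; [apply is_derive_pressure_mass|].
  rewrite <- pressure_integrand. field. lra.
Qed.

Lemma is_lim_pressure : is_lim pressure p_infty 0.
Proof.
  pose proof beta_bounds.
  apply (is_lim_ext_loc (fun r => pres_const * Rpower r (2 * (1 - 2 * beta)))).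
  - exists 1. intros r Hr. unfold pressure. rewrite pres_ge_1 by (simpl; nra).
    rewrite <- (Rpower_pow 2 r), Rpower_mult by lra. now replace (INR 2) with 2 by (simpl; ring).
  - apply is_lim_scal_Rpower_neg. lra.
Qed.

Lemma pressure_is_RInt_gen r :
  is_RInt_gen (fun s => / s ^ 2 * mass rho s * rho s) (at_point r) (Rbar_locally p_infty)
    (pressure r).
Proof.
  set (f := fun s => - pressure s).
  assert (Hf : forall s, is_derive f s (s * dens (s ^ 2) * mass_scaled (s ^ 2))).
  { intros s. unfold f. eapply is_derive_eq; [apply (is_derive_opp pressure), is_derive_pressure_mass|].
    rsimpl. ring. }
  assert (Hc : Ck (fun _ => True) 1 (fun s => s * dens (s ^ 2) * mass_scaled (s ^ 2))).
  { pose proof (@open_true R_UniformSpace) as HT.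
    apply Ck_mult, (Ck_comp _ HT (fun _ => True) 1 mass_scaled (fun s => s ^ 2));
      auto using Ck_mass_scaled, Ck_pow.
    apply Ck_mult, (Ck_comp _ HT (fun _ => True) 1 dens (fun s => s ^ 2));
      auto using Ck_dens, Ck_pow, Ck_id. }
  apply (is_RInt_gen_ext (Derive f)).
  - apply filter_forall. intros ab s _. now rewrite pressure_integrand, (is_derive_unique _ _ _ (Hf s)).
  - replace (pressure r) with (0 - f r) by (unfold f; ring).
    apply is_RInt_gen_Derive.
    + apply filter_forall. intros ab s _. eexists; apply Hf.
    + apply filter_forall. intros ab s _.
      apply (continuous_ext (fun s => s * dens (s ^ 2) * mass_scaled (s ^ 2))).
      * intros t. symmetry; apply is_derive_unique, Hf.
      * now apply continuous_Ck.
    + intros P HP. now apply locally_singleton in HP.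
    + assert (Hl : is_lim f p_infty (Rbar_opp 0)) by apply (is_lim_opp pressure), is_lim_pressure.
      simpl in Hl. rewrite Ropp_0 in Hl. exact Hl.
Qed.

Lemma rho_0 : rho 0 = dens 0.
Proof. unfold rho. f_equal. ring. Qed.

Lemma rho_1 : rho 1 = 1.
Proof. unfold rho. rewrite pow1. apply dens_1. Qed.

Lemma smooth_on_open_eos : smooth_on_open eos 0 (rho 0).
Proof.
  rewrite rho_0. apply smooth_on_open_Ck. intros k.
  apply Ck_comp_dens_inv, (Ck_subset (fun _ => True)); [auto|apply Ck_pres].
Qed.

Lemma Derive_eos_pos x : 0 < x < rho 0 -> 0 < Derive eos x.
Proof.
  rewrite rho_0. intros Hx. destruct (dens_inv_spec x Hx) as [HT _].
  unfold eos. rewrite (is_derive_unique (fun y : R => pres (dens_inv y)) x _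
    (is_derive_comp pres dens_inv x _ _ (is_derive_pres (dens_inv x)) (is_derive_dens_inv x Hx))).
  pose proof (ddens_neg (dens_inv x)). pose proof (dens_pos (dens_inv x)).
  pose proof (mass_scaled_pos (dens_inv x)).
  assert (/ ddens (dens_inv x) < 0) by now apply Rinv_lt_0_compat.
  assert (0 < dens (dens_inv x) * mass_scaled (dens_inv x) / 2) by (apply Rdiv_lt_0_compat; nra).
  rsimpl. nra.
Qed.

Lemma pressure_eos r : 0 < r -> pressure r = eos (rho r).
Proof. intros Hr. unfold pressure, eos, rho. rewrite dens_inv_dens; [reflexivity|now apply pow_lt]. Qed.

Lemma eos_polytropic x : 0 < x < rho 1 ->
  eos x = 4 * PI * (n - 1) ^ 2 / (2 * (n + 1) * (n - 3)) * Rpower x ((n + 1) / n).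
Proof.
  rewrite rho_1. intros Hx. pose proof beta_bounds.
  destruct (dens_Rpower_inv x Hx) as [HT HdT]. set (T := Rpower x (- / beta)) in *.
  unfold eos. rewrite <- HdT at 1. rewrite dens_inv_dens, pres_ge_1 by lra.
  unfold T, pres_const. rewrite Rpower_mult. do 2 f_equal. unfold beta. field. split; lra.
Qed.

Lemma mass_rho_gt_1 r : 1 < r ->
  mass rho r = 4 * PI * ((n - 1) / (n - 3)) * Rpower r ((n - 3) / (n - 1)).
Proof.
  intros Hr. unfold rho. rewrite mass_dens_ge_1 by lra.
  unfold core_mass. do 2 f_equal. unfold beta. field. lra.
Qed.

Lemma is_lim_mass_rho : is_lim (mass rho) p_infty p_infty.
Proof.
  pose proof PI_RGT_0.
  apply (is_lim_ext_loc (fun r => 4 * PI * ((n - 1) / (n - 3)) * Rpower r ((n - 3) / (n - 1)))).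
  - exists 1. intros r Hr. symmetry. now apply mass_rho_gt_1.
  - apply is_lim_scal_Rpower_pos; [apply Rmult_lt_0_compat; [lra|]|]; apply Rdiv_lt_0_compat; lra.
Qed.

End Construction.

Theorem mainTheorem6 (n : R) (hn : 3 < n) :
  exists (rho p : R -> R),
    (forall r, 0 <= r -> 0 < rho r) /\
    (forall r, 0 <= r -> 0 < p r) /\
    (exists g : R -> R, smooth g /\ forall r, rho r = g (r ^ 2)) /\
    (exists h : R -> R, smooth h /\ forall r, p r = h (r ^ 2)) /\
    (forall r, 0 < r -> Derive rho r < 0) /\
    Derive_n rho 2 0 < 0 /\
    (forall r, 1 < r -> rho r = Rpower r (- (2 * n / (n - 1)))) /\
    (forall r, 0 <= r ->
       is_RInt_gen (fun s => / s ^ 2 * mass rho s * rho s)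
         (at_point r) (Rbar_locally p_infty) (p r)) /\
    (forall r, 0 < r -> is_derive p r (- (rho r * mass rho r / r ^ 2))) /\
    (exists F : R -> R,
       smooth_on_open F 0 (rho 0) /\
       (forall x, 0 < x < rho 0 -> Derive F x > 0) /\
       (forall r, 0 < r -> p r = F (rho r)) /\
       (forall x, 0 < x < rho 1 ->
          F x = 4 * PI * (n - 1) ^ 2 / (2 * (n + 1) * (n - 3))
                * Rpower x ((n + 1) / n))) /\
    (forall r, 1 < r ->
       mass rho r = 4 * PI * ((n - 1) / (n - 3)) * Rpower r ((n - 3) / (n - 1))) /\
    is_lim (mass rho) p_infty p_infty.
Proof.
  exists (rho n), (pressure n).
  refine (conj _ (conj _ (conj _ (conj _ (conj _ (conj _ (conj _ (conj _ (conj _ (conj _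
            (conj _ _))))))))))).
  - intros r _. apply dens_pos, hn.
  - intros r _. apply pres_pos, hn.
  - exists (dens n). split; [apply smooth_Ck; intros k; apply Ck_dens|reflexivity].
  - exists (pres n). split; [apply smooth_Ck; intros k; apply Ck_pres|reflexivity].
  - now apply Derive_rho_neg.
  - now apply Derive2_rho_0.
  - now apply rho_gt_1.
  - intros r _. now apply pressure_is_RInt_gen.
  - now apply is_derive_pressure.
  - exists (eos n). refine (conj _ (conj _ (conj _ _))).
    + now apply smooth_on_open_eos.
    + now apply Derive_eos_pos.
    + now apply pressure_eos.
    + now apply eos_polytropic.
  - now apply mass_rho_gt_1.
  - now apply is_lim_mass_rho.
Qed.
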